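(* Let $A$ be a finite non-cyclic abelian group. Then $\Delta_D(A)^*$ is disconnected if and only if $A\cong\mathfrak{G}\times\mathfrak{K}$, where $\mathfrak{G}$ is a cyclic group and $\mathfrak{K}$ is an elementary abelian $p$-group for some prime $p$.
   Context: The deep commuting graph $\Delta_D(G)$ has vertex set $G$, distinct vertices adjacent iff their preimages commute in a Schur cover $\tilde G$ of $G$ (a central extension $\{e\}\to M(G)\to\tilde G\to G\to\{e\}$ with kernel contained in $Z(\tilde G)\cap[\tilde G,\tilde G]$, of maximal order; $M(G)$ the Schur multiplier). A vertex is dominant if adjacent to every other vertex; the reduced graph $\Gamma^*$ is the subgraph induced by the non-dominant vertices. An elementary abelian $p$-group is one whose non-identity elements all have order $p$. *)

From HB Require Import structures.
From mathcomp Require Import all_boot all_fingroup all_solvable.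
Set Implicit Arguments. Unset Strict Implicit. Unset Printing Implicit Defensive.
Local Open Scope group_scope.

Definition stem_ext (aT gT : finGroupType) (A : {set aT}) (H : {group gT})
    (f : {morphism H >-> aT}) : Prop :=
  f @* H = A /\ 'ker f \subset 'Z(H) :&: H^`(1).

Definition schur_cover (aT gT : finGroupType) (A : {set aT}) (H : {group gT})
    (f : {morphism H >-> aT}) : Prop :=
  stem_ext A f /\
  forall (gT' : finGroupType) (H' : {group gT'}) (f' : {morphism H' >-> aT}),
    stem_ext A f' -> #|H'| <= #|H|.

Definition deep_adj (aT gT : finGroupType) (A : {set aT}) (H : {group gT})
    (f : {morphism H >-> aT}) (x y : aT) : bool :=
  [&& x \in A, y \in A, x != y &
   [forall x' in H, forall y' in H,
      (f x' == x) ==> (f y' == y) ==> (x' * y' == y' * x')]].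

Definition dominant (aT gT : finGroupType) (A : {set aT}) (H : {group gT})
    (f : {morphism H >-> aT}) (x : aT) : bool :=
  (x \in A) && [forall y in A, (y != x) ==> deep_adj A f x y].

Definition nondominant (aT gT : finGroupType) (A : {set aT}) (H : {group gT})
    (f : {morphism H >-> aT}) (x : aT) : bool :=
  (x \in A) && ~~ dominant A f x.

(* edge relation of the reduced graph Δ_D(A)^* (induced on non-dominant vertices) *)
Definition reduced_adj (aT gT : finGroupType) (A : {set aT}) (H : {group gT})
    (f : {morphism H >-> aT}) : rel aT :=
  fun x y => [&& nondominant A f x, nondominant A f y & deep_adj A f x y].

Definition reduced_disconnected (aT gT : finGroupType) (A : {set aT})
    (H : {group gT}) (f : {morphism H >-> aT}) : Prop :=
  exists u v, [/\ nondominant A f u, nondominant A f v &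
                  ~~ connect (reduced_adj A f) u v].

(* Let f : H ->> A be a Schur cover of the abelian group A.  As 'ker f is
   central, the commutator of lifts lcomm f x y is a well-defined alternating
   bimultiplicative form on A; x and y are adjacent in the deep commuting graph
   iff lcomm f x y = 1, and the dominant vertices form the radical of the form.
   Write A = <[x]> \x B with #[x] = exponent A.  Comparing the order of the
   Schur multiplier, realised by explicit stem extensions, with a commutator
   count in H shows that lcomm f x b = 1 forces b \in B^#[x] for b \in B, so
   lcomm f x w has order N = exponent B when #[w] = N.  If N is not prime, every
   nondominant a is joined to x ^+ q (q the least prime divisor of N), possibly
   through a ^+ q and x ^+ (N %/ q), and the reduced graph is connected.
   Conversely, if A = G \x K with K elementary abelian, split an element u of
   order p off K, with complement B: the vertices a with lcomm f u a = 1 form a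
   closed set of the reduced graph containing u but no v \in B outside B^p. *)

From HB Require Import structures.
From mathcomp Require Import all_boot all_fingroup all_solvable zmodp.
Set Implicit Arguments. Unset Strict Implicit. Unset Printing Implicit Defensive.
Local Open Scope group_scope.

Section PowerSubgroup.
Variable gT : finGroupType.
Implicit Types (A : {set gT}) (B : {group gT}).

Definition powg n A := <<[set x ^+ n | x in A]>>.
Canonical powg_group n A := Eval hnf in [group of powg n A].

Lemma mem_powgX n A x : x \in A -> x ^+ n \in powg n A.
Proof. by move=> Ax; apply/mem_gen/imset_f. Qed.

Lemma powgE n B : abelian B -> powg n B = [set x ^+ n | x in B].
Proof.
move=> cBB; apply: gen_set_id; apply/group_setP; split.
  by apply/imsetP; exists 1; rewrite ?expg1n.
move=> _ _ /imsetP[x Bx ->] /imsetP[z Bz ->]; apply/imsetP; exists (x * z).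
  exact: groupM.
by rewrite expgMn //; apply: (centsP cBB).
Qed.

Lemma powgP n B y :
  abelian B -> reflect (exists2 x, x \in B & y = x ^+ n) (y \in powg n B).
Proof. by move/(powgE n)->; apply: imsetP. Qed.

Lemma powg_sub n B : powg n B \subset B.
Proof. by rewrite gen_subG; apply/subsetP=> _ /imsetP[x Bx ->]; apply: groupX. Qed.

Lemma powg_exponent n B : exponent B %| n -> powg n B = 1.
Proof.
move=> eBn; apply/trivgP; rewrite gen_subG; apply/subsetP=> _ /imsetP[x Bx ->].
by rewrite inE -order_dvdn (dvdn_trans (dvdn_exponent Bx)).
Qed.

Lemma powg_proper p B : abelian B -> prime p -> p %| #|B| -> powg p B \proper B.
Proof.
move=> cBB pr_p /(Cauchy pr_p)[y By oy]; rewrite properEneq powg_sub andbT.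
apply/negP=> /eqP powBB; have /imset_injP injB : #|[set x ^+ p | x in B]| == #|B|.
  by rewrite -powgE // powBB.
suff y1 : y = 1 by rewrite -oy y1 order1 in pr_p.
by apply: injB; rewrite ?group1 // expg1n -oy expg_order.
Qed.

End PowerSubgroup.

Section CentralExtension.
Variables (gT aT : finGroupType) (P : {group gT}) (g : {morphism P >-> aT}).
Hypotheses (cgP : abelian (g @* P)) (kgZ : 'ker g \subset 'Z(P)).

Lemma commg_ker h k : h \in P -> k \in P -> [~ h, k] \in 'ker g.
Proof.
move=> Ph Pk; apply/kerP; first exact: groupR.
by rewrite morphR //; apply/eqP/commgP/(centsP cgP); apply: mem_morphim.
Qed.

Lemma commute_ker z h : z \in 'ker g -> h \in P -> commute z h.
Proof. by move=> /(subsetP kgZ)/centerP[_ cPz] /cPz/commute_sym. Qed.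

Lemma commg_ker1 z h : z \in 'ker g -> h \in P -> [~ z, h] = 1.
Proof. by move=> Kz Ph; apply/eqP/commgP/commute_ker. Qed.

Lemma commMg_central h1 h2 k : h1 \in P -> h2 \in P -> k \in P ->
  [~ h1 * h2, k] = [~ h1, k] * [~ h2, k].
Proof.
move=> Ph1 Ph2 Pk; rewrite commMgR.
by rewrite (commg_ker1 (commg_ker Ph1 Pk) Ph2) mulg1.
Qed.

Lemma commgM_central h k1 k2 : h \in P -> k1 \in P -> k2 \in P ->
  [~ h, k1 * k2] = [~ h, k1] * [~ h, k2].
Proof.
move=> Ph Pk1 Pk2; rewrite commgMR (commg_ker1 (commg_ker Ph Pk1) Pk2) mulg1.
by apply: commute_ker; [apply: commg_ker | apply: groupR].
Qed.

Lemma commXg_central h k n : h \in P -> k \in P -> [~ h ^+ n, k] = [~ h, k] ^+ n.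
Proof.
move=> Ph Pk; apply: commXg; apply: commute_sym.
by apply: commute_ker => //; apply: commg_ker.
Qed.

Lemma commgX_central h k n : h \in P -> k \in P -> [~ h, k ^+ n] = [~ h, k] ^+ n.
Proof.
move=> Ph Pk; apply: commgX; apply: commute_sym.
by apply: commute_ker => //; apply: commg_ker.
Qed.

(* Two lifts of the same element differ by a central factor. *)
Lemma commg_morph_eq h h' k k' : h \in P -> h' \in P -> k \in P -> k' \in P ->
  g h = g h' -> g k = g k' -> [~ h, k] = [~ h', k'].
Proof.
have ker_div y y' : y \in P -> y' \in P -> g y = g y' ->
    exists2 z, z \in 'ker g & y' = y * z.
  move=> Py Py' gyy'; exists (y^-1 * y'); last by rewrite mulKVg.
  apply/kerP; first by rewrite groupM ?groupV.
  by rewrite morphM ?groupV // morphV // gyy' mulVg.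
move=> Ph Ph' Pk Pk' /(ker_div _ _ Ph Ph')[z1 Kz1 ->] /(ker_div _ _ Pk Pk')[z2 Kz2 ->].
have [Pz1 Pz2] := (dom_ker Kz1, dom_ker Kz2).
rewrite commMg_central ?groupM // (commg_ker1 Kz1) ?groupM // mulg1 commgM_central //.
by rewrite -(invg_comm z2) (commg_ker1 Kz2) // invg1 mulg1.
Qed.

End CentralExtension.

Section LiftedCommutator.
Variables (gT aT : finGroupType) (H : {group gT}) (f : {morphism H >-> aT}).

(* [repr] picks a lift; for central extensions the choice does not matter. *)
Definition lcomm x y := [~ repr (f @*^-1 [set x]), repr (f @*^-1 [set y])].

Lemma lcommC x y : lcomm y x = (lcomm x y)^-1.
Proof. by rewrite /lcomm invg_comm. Qed.

Lemma lcommxx x : lcomm x x = 1.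
Proof. exact: commgg. Qed.

Variable A : {group aT}.
Hypotheses (cA : abelian A) (fH : f @* H = A) (kZ : 'ker f \subset 'Z(H)).

Let cfH : abelian (f @* H). Proof. by rewrite fH. Qed.

Lemma mem_lift x : x \in A -> exists2 h, h \in H & x = f h.
Proof. by rewrite -fH => /morphimP[h Hh _ ->]; exists h. Qed.

Lemma lcommE h k : h \in H -> k \in H -> lcomm (f h) (f k) = [~ h, k].
Proof.
have repr_lift y : y \in H -> repr (f @*^-1 [set f y]) \in f @*^-1 [set f y].
  by move=> Hy; apply: (mem_repr y); rewrite !inE Hy /=.
move=> Hh Hk; move: (repr_lift h Hh) (repr_lift k Hk).
move=> /morphpreP[Hh' /set1P fh'] /morphpreP[Hk' /set1P fk'].
exact: (commg_morph_eq cfH kZ).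
Qed.

Lemma lcommMl x1 x2 y : x1 \in A -> x2 \in A -> y \in A ->
  lcomm (x1 * x2) y = lcomm x1 y * lcomm x2 y.
Proof.
move=> /mem_lift[h1 H1 ->] /mem_lift[h2 H2 ->] /mem_lift[k Hk ->].
by rewrite -morphM // !lcommE ?groupM // (commMg_central cfH kZ).
Qed.

Lemma lcommMr x y1 y2 : x \in A -> y1 \in A -> y2 \in A ->
  lcomm x (y1 * y2) = lcomm x y1 * lcomm x y2.
Proof.
move=> /mem_lift[h Hh ->] /mem_lift[k1 H1 ->] /mem_lift[k2 H2 ->].
by rewrite -morphM // !lcommE ?groupM // (commgM_central cfH kZ).
Qed.

Lemma lcommXl x y n : x \in A -> y \in A -> lcomm (x ^+ n) y = lcomm x y ^+ n.
Proof.
move=> /mem_lift[h Hh ->] /mem_lift[k Hk ->].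
by rewrite -morphX // !lcommE ?groupX // (commXg_central cfH kZ).
Qed.

Lemma lcommXr x y n : x \in A -> y \in A -> lcomm x (y ^+ n) = lcomm x y ^+ n.
Proof.
move=> /mem_lift[h Hh ->] /mem_lift[k Hk ->].
by rewrite -morphX // !lcommE ?groupX // (commgX_central cfH kZ).
Qed.

Lemma lcomm_cycle x i j : x \in A -> lcomm (x ^+ i) (x ^+ j) = 1.
Proof. by move=> Ax; rewrite lcommXl ?groupX // lcommXr // lcommxx !expg1n. Qed.

Lemma lcomm1r x : x \in A -> lcomm x 1 = 1.
Proof. by move=> Ax; have := lcommXr 0 Ax Ax; rewrite !expg0. Qed.

Lemma lcomm_exponent (G K : {group aT}) : G \x K = A -> cyclic G ->
  {in A &, forall a b, lcomm a b ^+ exponent K = 1}.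
Proof.
move=> /dprodP[_ defGK _ _] /cyclicP[c defG] a b.
have [sGA sKA] : G \subset A /\ K \subset A by rewrite -defGK mulG_subl mulG_subr.
have Ac : c \in A by rewrite (subsetP sGA) // defG cycle_id.
rewrite -{1 2}defGK => /mulsgP[g k Gg Kk ->] /mulsgP[g' k' Gg' Kk' ->].
have [Ag Ag'] := (subsetP sGA g Gg, subsetP sGA g' Gg').
have [Ak Ak'] := (subsetP sKA k Kk, subsetP sKA k' Kk').
rewrite -lcommXl ?groupM // expgMn; last exact: (centsP cA).
rewrite (expg_exponent Kk) mulg1 lcommMr ?groupX //.
move: Gg Gg'; rewrite defG => /cycleP[i ->] /cycleP[j ->].
rewrite -expgM lcomm_cycle // mul1g lcommXl ?groupX //.
by rewrite mulnC expgM -lcommXr // (expg_exponent Kk') lcomm1r ?expg1n.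
Qed.

End LiftedCommutator.

Section ReducedGraph.
Variables (gT aT : finGroupType) (H : {group gT}) (f : {morphism H >-> aT}).
Variable A : {group aT}.
Hypotheses (cA : abelian A) (fH : f @* H = A) (kZ : 'ker f \subset 'Z(H)).

Local Notation lcommE := (lcommE cA fH kZ).
Local Notation reduced := (reduced_adj A f).

Lemma deep_adjE x y :
  deep_adj A f x y = [&& x \in A, y \in A, x != y & lcomm f x y == 1].
Proof.
rewrite /deep_adj; case Ax: (x \in A); case Ay: (y \in A) => //=.
case: (x != y) => //=.
have [h Hh ->] := mem_lift fH Ax; have [k Hk ->] := mem_lift fH Ay.
rewrite lcommE //; apply/forall_inP/eqP => [|hk1 h' Hh'].
  by move/(_ h Hh)/forall_inP/(_ k Hk); rewrite !eqxx => /eqP/commgP/eqP.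
apply/forall_inP=> k' Hk'; apply/implyP=> /eqP fh'; apply/implyP=> /eqP fk'.
apply/eqP; change (commute h' k'); apply/commgP.
by rewrite -(lcommE Hh' Hk') fh' fk' lcommE // hk1.
Qed.

Lemma dominantP x :
  x \in A -> reflect {in A, forall y, lcomm f x y = 1} (dominant A f x).
Proof.
move=> Ax; rewrite /dominant Ax /=; apply: (iffP forall_inP) => dom_x y Ay.
  have [-> | ne_yx] := eqVneq y x; first exact: lcommxx.
  by move: (dom_x y Ay); rewrite ne_yx deep_adjE Ax Ay (eq_sym x) ne_yx => /eqP.
apply/implyP=> ne_yx; rewrite deep_adjE Ax Ay (eq_sym x) ne_yx /=.
by rewrite (dom_x y Ay).
Qed.

Lemma nondominantP x y : x \in A -> y \in A -> lcomm f x y != 1 ->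
  nondominant A f x.
Proof.
move=> Ax Ay xy1; rewrite /nondominant Ax /=.
by apply: contra xy1 => /(dominantP Ax)/(_ y Ay)->.
Qed.

Lemma reduced_adjE x y : reduced x y =
  [&& nondominant A f x, nondominant A f y, x != y & lcomm f x y == 1].
Proof.
rewrite /reduced_adj deep_adjE /nondominant.
by case: (x \in A); case: (y \in A).
Qed.

Lemma reduced_adj_sym : symmetric reduced.
Proof.
move=> x y; rewrite !reduced_adjE eq_sym lcommC invg_eq1.
by case: (nondominant A f x); case: (nondominant A f y).
Qed.

Lemma connect_reduced x y : nondominant A f x -> nondominant A f y ->
  lcomm f x y = 1 -> connect reduced x y.
Proof.
move=> ndx ndy xy1; have [-> | ne_xy] := eqVneq x y; first exact: connect0.
by apply: connect1; rewrite reduced_adjE ndx ndy ne_xy xy1 eqxx.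
Qed.

End ReducedGraph.

Section ReducedConnected.
Variables (gT aT : finGroupType) (H : {group gT}) (f : {morphism H >-> aT}).
Variable A : {group aT}.
Hypotheses (cA : abelian A) (fH : f @* H = A) (kZ : 'ker f \subset 'Z(H)).
Variables (N : nat) (z w : aT).
Hypotheses (lcommN : {in A &, forall a b, lcomm f a b ^+ N = 1}).
Hypotheses (Az : z \in A) (Aw : w \in A) (ozw : #[lcomm f z w] = N).

Local Notation reduced := (reduced_adj A f).
Local Notation nondominant := (nondominant A f).
Local Notation lcommXl := (lcommXl cA fH kZ).
Local Notation lcommXr := (lcommXr cA fH kZ).
Local Notation connect_reduced := (connect_reduced cA fH kZ).

Lemma nondominant_cycle i : ~~ (N %| i) -> nondominant (z ^+ i).
Proof.
move=> Ni; apply: (nondominantP cA fH kZ _ Aw); first exact: groupX.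
by rewrite lcommXl // -order_dvdn ozw.
Qed.

Lemma connect_cycle i j : ~~ (N %| i) -> ~~ (N %| j) ->
  connect reduced (z ^+ i) (z ^+ j).
Proof.
move=> Ni Nj; apply: connect_reduced; try exact: nondominant_cycle.
exact: (lcomm_cycle cA fH kZ).
Qed.

(* Every nondominant vertex reaches the power z ^+ q, for q the least prime
   divisor of N: either directly, or through a ^+ q and z ^+ (N %/ q). *)
Lemma reduced_connected : 1 < N -> ~~ prime N ->
  forall a b, nondominant a -> nondominant b -> connect reduced a b.
Proof.
move=> N_gt1 N'p; set q := pdiv N.
have q_gt1 : 1 < q by apply/prime_gt1/pdiv_prime.
have q_ltN : q < N.
  rewrite ltn_neqAle dvdn_leq ?(ltnW N_gt1) ?pdiv_dvd // andbT.
  by apply: contraNneq N'p => <-; apply: pdiv_prime.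
have NNq : ~~ (N %| q) by rewrite gtnNdvd ?(ltnW q_gt1).
have NNq' : ~~ (N %| N %/ q).
  by rewrite gtnNdvd ?ltn_Pdiv ?divn_gt0 ?(ltnW q_ltN) ?(ltnW q_gt1) ?(ltnW N_gt1).
have to_hub a : nondominant a -> connect reduced a (z ^+ q).
  move=> nda; have Aa : a \in A by case/andP: nda.
  have [dom_aq | ndaq] := boolP (dominant A f (a ^+ q)).
    move/(dominantP cA fH kZ (groupX q Aa)): dom_aq => dom_aq.
    apply: connect_reduced => //; first exact: nondominant_cycle.
    by rewrite lcommXr // -lcommXl // dom_aq.
  have {}ndaq : nondominant (a ^+ q) by rewrite /nondominant groupX.
  apply: connect_trans (_ : connect reduced a (a ^+ q)) _.
    apply: connect_reduced => //.
    by rewrite lcommXr // lcommxx expg1n.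
  apply: connect_trans (connect_cycle NNq' NNq).
  apply: connect_reduced => //; first exact: nondominant_cycle.
  rewrite lcommXl ?lcommXr ?groupX // -expgM.
  by rewrite divnK ?pdiv_dvd ?lcommN.
move=> a b nda ndb; apply: connect_trans (to_hub a nda) _.
by rewrite (sym_connect_sym (reduced_adj_sym cA fH kZ)) to_hub.
Qed.

End ReducedConnected.

Section SchurCard.
Variable gT : finGroupType.
Implicit Type s : seq gT.

Definition cycle_dprod s := \big[dprod/1]_(x <- s) <[x]>.

(* The order of the Schur multiplier of cycle_dprod s, computed recursively
   from M(<[x]> \x B) = M(B) \x B / B^#[x]. *)
Fixpoint schur_card s : nat :=
  if s is x :: s' then
    #|cycle_dprod s' : powg #[x] (cycle_dprod s')| * schur_card s'
  else 1.

Lemma cycle_dprod_cons x s (B : {group gT}) : cycle_dprod (x :: s) = B ->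
  exists2 Bs : {group gT}, cycle_dprod s = Bs & <[x]> \x Bs = B.
Proof.
rewrite /cycle_dprod big_cons => defB; have [[_ Bs _ defBs] _ _ _] := dprodP defB.
by exists Bs; rewrite // -defBs.
Qed.

Lemma schur_card_gt0 s (B : {group gT}) : cycle_dprod s = B -> 0 < schur_card s.
Proof.
elim: s B => //= x s IHs B /cycle_dprod_cons[Bs defBs _].
by rewrite muln_gt0 (IHs Bs) // defBs indexg_gt0.
Qed.

End SchurCard.

Section UpperBoundStep.
Variables (gT aT : finGroupType) (P : {group gT}) (g : {morphism P >-> aT}).
Hypotheses (cgP : abelian (g @* P)) (kgZ : 'ker g \subset 'Z(P)).
Variables (x : aT) (B C : {group aT}) (xt : gT).
Hypotheses (defC : <[x]> \x B = C) (sCP : C \subset g @* P).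
Hypotheses (Pxt : xt \in P) (gxt : g xt = x).

Local Notation PB := (g @*^-1 B).

Let sBC : B \subset C. Proof. by have [_ <- _ _] := dprodP defC; apply: mulG_subr. Qed.
Let sBP : B \subset g @* P. Proof. exact: subset_trans sCP. Qed.
Let cBB : abelian B. Proof. exact: abelianS cgP. Qed.
Let sPBP : PB \subset P. Proof. exact: subsetIl. Qed.

Lemma comm_xt_morphM : {in PB &, {morph (fun h => [~ xt, h]) : h k / h * k}}.
Proof. by move=> h k /(subsetP sPBP) Ph /(subsetP sPBP) Pk; apply: (commgM_central cgP kgZ). Qed.

Canonical comm_xt := Morphism comm_xt_morphM.

Lemma comm_xtE h : comm_xt h = [~ xt, h].
Proof. by []. Qed.

Lemma comm_xt_in_ker h : h \in PB -> comm_xt h \in 'ker g.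
Proof. by move=> /(subsetP sPBP) Ph; apply: (commg_ker cgP). Qed.

Lemma morphpre_powg_sub_ker : g @*^-1 (powg #[x] B) \subset 'ker comm_xt.
Proof.
apply/subsetP=> h /morphpreP[Ph /(powgP _ _ cBB)[y By gh]].
have PBh : h \in PB by rewrite mem_morphpre // gh groupX.
have /morphimP[h0 Ph0 _ gh0] := subsetP sBP y By.
apply/kerP => //=; have Kxt : xt ^+ #[x] \in 'ker g.
  by apply/kerP; rewrite ?groupX // morphX // gxt expg_order.
have PBh0 : h0 \in PB by rewrite mem_morphpre // -gh0.
have -> : comm_xt h = comm_xt (h0 ^+ #[x]).
  by apply: (commg_morph_eq cgP kgZ); rewrite ?groupX ?morphX // -gh0.
by rewrite morphX //= -(commXg_central cgP kgZ) // (commg_ker1 kgZ).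
Qed.

Lemma der_morphpre_sub : (g @*^-1 C)^`(1) \subset comm_xt @* PB <*> PB^`(1).
Proof.
have lift_dec h : h \in g @*^-1 C -> exists a, exists2 hb, hb \in PB & g h = g (xt ^+ a * hb).
  case/morphpreP=> Ph; have [_ <- _ _] := dprodP defC.
  case/mulsgP=> _ b /cycleP[a ->] Bb ->.
  have /morphimP[hb Phb _ gb] := subsetP sBP b Bb.
  exists a, hb; first by rewrite mem_morphpre // -gb.
  by rewrite gb morphM ?groupX // morphX // gxt.
have inJ_comm h : h \in PB -> [~ xt, h] \in comm_xt @* PB <*> PB^`(1).
  by move=> PBh; rewrite mem_gen // inE mem_morphim.
rewrite derg1 gen_subG; apply/subsetP=> _ /imset2P[h k PCh PCk ->].
have [Ph Pk] := (subsetP (subsetIl _ _) h PCh, subsetP (subsetIl _ _) k PCk).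
have [a [hb PBhb gh]] := lift_dec h PCh; have [c [kb PBkb gk]] := lift_dec k PCk.
have [Phb Pkb] := (subsetP sPBP hb PBhb, subsetP sPBP kb PBkb).
have [Pxa Pxc] := (groupX a Pxt, groupX c Pxt).
have [Phb' Pkb'] := (groupM Pxa Phb, groupM Pxc Pkb).
have -> : [~ h, k] = [~ xt ^+ a * hb, xt ^+ c * kb].
  exact: (commg_morph_eq cgP kgZ).
rewrite !(commMg_central cgP kgZ, commgM_central cgP kgZ) //.
rewrite (commXg_central cgP kgZ a) // (commgX_central cgP kgZ c) // commgg !expg1n mul1g.
rewrite (commXg_central cgP kgZ) // (commgX_central cgP kgZ) // -(invg_comm xt hb).
rewrite groupM ?groupX ?inJ_comm // groupM ?groupX ?groupV ?inJ_comm //.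
by rewrite mem_gen // inE (mem_commg PBhb PBkb) orbT.
Qed.

Lemma card_der_morphpre :
  #|(g @*^-1 C)^`(1)| <= #|PB : 'ker comm_xt| * #|PB^`(1)|.
Proof.
have cPB' : PB^`(1) \subset 'C(comm_xt @* PB).
  apply/centsP=> v /(subsetP (der_sub 1 _))/(subsetP sPBP) Pv _ /morphimP[h _ PBh ->].
  exact/commute_sym/(commute_ker kgZ)/Pv/comm_xt_in_ker.
have -> : #|PB : 'ker comm_xt| = #|comm_xt @* PB| by rewrite card_morphim setIid.
apply: leq_trans (subset_leq_card der_morphpre_sub) _.
by rewrite cent_joinEr // mul_cardG leq_pmulr ?cardG_gt0.
Qed.

Lemma index_ker_comm_xt : #|PB : 'ker comm_xt| <= #|B : powg #[x] B|.
Proof.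
rewrite -(index_morphpre (powg #[x] B) sBP).
by apply/dvdn_leq/indexgS/morphpre_powg_sub_ker; apply: indexg_gt0.
Qed.

Lemma ker_comm_xt_eq : #|B : powg #[x] B| <= #|PB : 'ker comm_xt| ->
  'ker comm_xt = g @*^-1 (powg #[x] B).
Proof.
move=> le_index; apply/esym/eqP; rewrite eqEcard morphpre_powg_sub_ker /=.
rewrite -(index_morphpre (powg #[x] B) sBP) in le_index.
have sKPB : 'ker comm_xt \subset PB := subsetIl _ _.
rewrite -(leq_pmul2r (indexg_gt0 PB ('ker comm_xt))) Lagrange //.
by rewrite -(Lagrange (morphpreS _ (powg_sub #[x] B))) leq_pmul2l.
Qed.

End UpperBoundStep.

Lemma card_der_morphpre_le (aT : finGroupType) (s : seq aT) (gT : finGroupType)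
    (P : {group gT}) (g : {morphism P >-> aT}) (B : {group aT}) :
  abelian (g @* P) -> 'ker g \subset 'Z(P) -> cycle_dprod s = B ->
  B \subset g @* P -> #|(g @*^-1 B)^`(1)| <= schur_card s.
Proof.
move=> cgP kgZ; elim: s B => [|x s IHs] B.
  rewrite /cycle_dprod big_nil => <- _.
  have /derG1P-> : abelian ('ker g) by apply: abelianS kgZ (center_abelian P).
  by rewrite cards1.
case/cycle_dprod_cons=> Bs defBs defB sBP.
have [sBsB xB] : Bs \subset B /\ x \in B.
  have [_ <- _ _] := dprodP defB; rewrite mulG_subr; split=> //.
  exact/(subsetP (mulG_subl _ _))/cycle_id.
have /morphimP[xt Pxt _ /esym gxt] := subsetP sBP x xB.
apply: leq_trans (card_der_morphpre cgP kgZ defB sBP Pxt gxt) _.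
have IHBs := IHs Bs defBs (subset_trans sBsB sBP).
apply: leq_trans (leq_mul (index_ker_comm_xt cgP kgZ defB sBP Pxt gxt) IHBs) _.
by rewrite /= defBs.
Qed.

Section TwistedProduct.
Variables (gT qT : finGroupType) (E : {group gT}) (c : {morphism E >-> qT}) (m : nat).

Definition twist_cond := abelian (c @* E) && (exponent (c @* E) %| m.+1).

(* The semidirect product of 'I_m.+1 with E \x c @* E, the generator acting by
   (e, q) |-> (e, q * c e).  It depends on [ok] only to carry the group
   instance declared below. *)
Inductive twisted_prod (ok : twist_cond) : predArgType :=
  TwistedProd (u : 'I_m.+1 * gT * qT) of (u.1.2 \in E) && (u.2 \in c @* E).

Variable ok : twist_cond.
Local Notation T := (twisted_prod ok).
Local Notation Q := (c @* E).

Definition twisted_val (u : T) := let: TwistedProd v _ := u in v.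
HB.instance Definition _ := [isSub for twisted_val].
#[hnf] HB.instance Definition _ := [Finite of T by <:].

Let cQQ : abelian Q. Proof. by case/andP: ok. Qed.
Let cQ q q' : q \in Q -> q' \in Q -> q * q' = q' * q.
Proof. by move=> Qq Qq'; apply: (centsP cQQ). Qed.

Lemma expg_twist_order e : e \in E -> c e ^+ m.+1 = 1.
Proof. by move=> Ee; case/andP: ok => _ /exponentP->; rewrite ?mem_morphim. Qed.

Lemma expg_twist e (a a' : 'I_m.+1) :
  e \in E -> c e ^+ (a * a')%g = c e ^+ a * c e ^+ a'.
Proof.
by move=> Ee; rewrite -expgD -[RHS](expg_mod _ (expg_twist_order Ee)).
Qed.

(* [twist] is total: components outside E or c @* E are replaced by 1. *)
Lemma twist_subproof (a : 'I_m.+1) (e : gT) (q : qT) :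
  let u := (a, if e \in E then e else 1, if q \in Q then q else 1) in
  (u.1.2 \in E) && (u.2 \in Q).
Proof. by rewrite /=; case: ifP => [-> | _]; case: ifP => [-> | _]; rewrite ?group1. Qed.

Definition twist (a : 'I_m.+1) e q : T := @TwistedProd ok _ (twist_subproof a e q).

Lemma twistE a e q : e \in E -> q \in Q -> val (twist a e q) = (a, e, q).
Proof. by move=> /= -> ->. Qed.

Lemma twistP (u : T) : exists a e q, [/\ e \in E, q \in Q & u = twist a e q].
Proof.
case: u => [[[a e] q] uP]; have /andP[/= Ee Qq] := uP.
by exists a, e, q; split=> //; apply: val_inj; rewrite twistE.
Qed.

Lemma eq_twist a e q a' e' q' : e \in E -> q \in Q -> e' \in E -> q' \in Q ->
  (twist a e q == twist a' e' q') = ((a, e, q) == (a', e', q')).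
Proof. by move=> *; rewrite -val_eqE !twistE. Qed.

Definition twisted_mul (u v : T) : T :=
  let: (a, e, q) := val u in let: (a', e', q') := val v in
  twist (a * a') (e * e') (q * q' * c e ^+ a').

Definition twisted_inv (u : T) : T :=
  let: (a, e, q) := val u in twist a^-1 e^-1 (q^-1 * c e ^+ a).

Let twisted_mulE a e q a' e' q' : e \in E -> q \in Q -> e' \in E -> q' \in Q ->
  twisted_mul (twist a e q) (twist a' e' q') = twist (a * a') (e * e') (q * q' * c e ^+ a').
Proof. by move=> Ee Qq Ee' Qq'; rewrite /twisted_mul !twistE. Qed.

Lemma twisted_mul1 : left_id (twist 1 1 1) twisted_mul.
Proof.
move=> u; have [a [e [q [Ee Qq ->]]]] := twistP u.
by rewrite twisted_mulE ?group1 // morph1 expg1n !mul1g mulg1.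
Qed.

Lemma twisted_mulV : left_inverse (twist 1 1 1) twisted_inv twisted_mul.
Proof.
move=> u; have [a [e [q [Ee Qq ->]]]] := twistP u.
have Qce : c e ^+ a \in Q by rewrite groupX ?mem_morphim.
have Qinv : q^-1 * c e ^+ a \in Q by rewrite groupM ?groupV.
rewrite /twisted_inv twistE // twisted_mulE ?groupV // !mulVg morphV // expgVn.
by rewrite -(mulgA _ _ q) (cQ Qce Qq) mulgA mulVg mul1g mulgV.
Qed.

Lemma twisted_mulA : associative twisted_mul.
Proof.
move=> u v w; have [a [e [q [Ee Qq ->]]]] := twistP u.
have [a' [e' [q' [Ee' Qq' ->]]]] := twistP v.
have [a'' [e'' [q'' [Ee'' Qq'' ->]]]] := twistP w.
have Qc y (b : 'I_m.+1) : y \in E -> c y ^+ b \in Q.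
  by move=> Ey; rewrite groupX ?mem_morphim.
rewrite (twisted_mulE a' a'') // (twisted_mulE a) ?groupM ?Qc //.
rewrite (twisted_mulE a a') // (twisted_mulE _ a'') ?groupM ?Qc //.
rewrite !mulgA expg_twist // morphM // expgMn; last by apply: cQ; rewrite mem_morphim.
congr (twist _ _ _); rewrite -!mulgA; congr (q * (q' * _)).
rewrite [RHS]mulgA -(cQ Qq'' (Qc e a' Ee)) -mulgA; congr (q'' * _).
by rewrite (cQ (Qc e' a'' Ee')) ?groupM ?Qc // mulgA.
Qed.

HB.instance Definition _ :=
  Finite_isGroup.Build T twisted_mulA twisted_mul1 twisted_mulV.

Lemma twistM a e q a' e' q' : e \in E -> q \in Q -> e' \in E -> q' \in Q ->
  twist a e q * twist a' e' q' = twist (a * a') (e * e') (q * q' * c e ^+ a').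
Proof. exact: twisted_mulE. Qed.

Lemma twist_in_morphM : {in E &, {morph (fun e => twist 1 e 1) : e e' / e * e'}}.
Proof. by move=> e e' Ee Ee' /=; rewrite twistM ?group1 // !mulg1. Qed.

Canonical twist_in := Morphism twist_in_morphM.

Lemma twist_split k q : k \in E -> q \in Q -> twist 1 k q = twist 1 k 1 * twist 1 1 q.
Proof. by move=> Ek Qq; rewrite twistM ?group1 // !mulg1 !mul1g. Qed.

Lemma twist_comm e : e \in E -> [~ twist 1 e 1, twist Zp1 1 1] = twist 1 1 (c e).
Proof.
move=> Ee; have Qce : c e \in Q by rewrite mem_morphim.
have ce_Zp1 : c e ^+ (Zp1 : 'I_m.+1) = c e.
  by have := expg_mod 1 (expg_twist_order Ee); rewrite expg1.
apply: (mulgI (twist Zp1 1 1 * twist 1 e 1)); rewrite -commgC.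
rewrite !twistM ?group1 ?morph1 ?expg1n ?mul1g //.
by rewrite ce_Zp1 !mulg1.
Qed.

Lemma twist_center k q :
  k \in 'Z(E) -> k \in 'ker c -> q \in Q -> twist 1 k q \in 'Z([set: T]).
Proof.
move=> /centerP[Ek cEk] /mker ck1 Qq; rewrite inE in_setT /=.
apply/centP=> u _; have [a [e [q' [Ee Qq' ->]]]] := twistP u.
by rewrite /commute !twistM // ck1 expg1n expg0 !mulg1 mul1g (cQ Qq Qq') (cEk e Ee).
Qed.

Lemma twist_der k q : k \in E^`(1) -> q \in Q -> twist 1 k q \in [set: T]^`(1).
Proof.
move=> E'k /morphimP[e _ Ee ->]; have Ek := subsetP (der_sub 1 E) k E'k.
rewrite twist_split ?mem_morphim // groupM //.
  have : twist_in k \in twist_in @* E^`(1) by apply: mem_morphim.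
  by rewrite morphim_der //; apply/subsetP/dergS/subsetT.
by rewrite -twist_comm // mem_commg ?in_setT.
Qed.

End TwistedProduct.

Arguments twist {gT qT E c m ok}.

Section LowerBoundStep.
Variables (aT gT : finGroupType) (x : aT) (B C : {group aT}).
Variables (E : {group gT}) (f : {morphism E >-> aT}).
Variable m : nat.
Hypotheses (cC : abelian C) (defC : <[x]> \x B = C) (stem_f : stem_ext B f).
Hypothesis ordx : #[x] = m.+1.

Local Notation W := (powg #[x] B).

Let sBC : B \subset C. Proof. by have [_ <- _ _] := dprodP defC; apply: mulG_subr. Qed.
Let cBB : abelian B. Proof. exact: abelianS cC. Qed.
Let nWB : B \subset 'N(W). Proof. exact: sub_abelian_norm (powg_sub _ _). Qed.
Let fE : f @* E = B. Proof. by case: stem_f. Qed.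
Let fEB e : e \in E -> f e \in B. Proof. by move=> Ee; rewrite -fE mem_morphim. Qed.
Let Cx : x \in C.
Proof. by have [_ <- _ _] := dprodP defC; apply/(subsetP (mulG_subl _ _))/cycle_id. Qed.

Lemma quo_f_morphM : {in E &, {morph (fun e => coset W (f e)) : e e' / e * e'}}.
Proof.
by move=> e e' Ee Ee' /=; rewrite morphM // morphM ?(subsetP nWB) ?fEB.
Qed.

Canonical quo_f := Morphism quo_f_morphM.

Lemma quo_f_im : quo_f @* E = B / W.
Proof.
apply/eqP; rewrite eqEsubset; apply/andP; split; apply/subsetP=> y.
  by case/morphimP=> e _ Ee ->; apply/mem_quotient/fEB.
case/morphimP=> b _ Bb ->; have /morphimP[e _ Ee ->] : b \in f @* E by rewrite fE.
exact: mem_morphim.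
Qed.

Lemma twist_ok : twist_cond quo_f m.
Proof.
rewrite /twist_cond quo_f_im quotient_abelian //= -ordx.
apply/exponentP=> _ /morphimP[b Nb Bb ->].
by rewrite -morphX //= coset_id // mem_powgX.
Qed.

Local Notation K := (twisted_prod twist_ok).
Local Notation Q := (quo_f @* E).

Lemma expx_twist (a a' : 'I_m.+1) : x ^+ (a * a')%g = x ^+ a * x ^+ a'.
Proof. by rewrite -expgD -[RHS]expg_mod_order ordx. Qed.

Definition twist_proj (u : K) := x ^+ (val u).1.1 * f (val u).1.2.

Lemma twist_projE a e q : e \in E -> q \in Q -> twist_proj (twist a e q) = x ^+ a * f e.
Proof. by move=> Ee Qq; rewrite /twist_proj twistE. Qed.

Lemma twist_projM : {in [set: K] &, {morph twist_proj : u v / u * v}}.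
Proof.
move=> u v _ _; have [a [e [q [Ee Qq ->]]]] := twistP u.
have [a' [e' [q' [Ee' Qq' ->]]]] := twistP v.
rewrite twistM // !twist_projE ?groupM ?groupX ?mem_morphim //.
rewrite expx_twist morphM // -!mulgA.
congr (_ * _); rewrite !mulgA; congr (_ * _).
by apply: (centsP cC); rewrite ?groupX // (subsetP sBC) ?fEB.
Qed.

Canonical twist_proj_morphism := Morphism twist_projM.

Lemma twist_proj_im : twist_proj @* [set: K] = C.
Proof.
apply/eqP; rewrite eqEsubset; apply/andP; split; apply/subsetP=> y.
  case/morphimP=> u _ _ ->; have [a [e [q [Ee Qq ->]]]] := twistP u.
  by rewrite /= twist_projE // groupM ?groupX // (subsetP sBC) ?fEB.
have [_ <- _ _] := dprodP defC; case/mulsgP=> _ b /cycleP[i ->] Bb ->.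
have /morphimP[e _ Ee ->] : b \in f @* E by rewrite fE.
apply/morphimP; exists (twist (inZp i) e 1); rewrite ?in_setT //.
by rewrite /= twist_projE ?group1 //= -ordx expg_mod_order.
Qed.

Lemma mem_ker_twist_proj a e q : e \in E -> q \in Q ->
  (twist a e q \in 'ker twist_proj) = (a == 1) && (e \in 'ker f).
Proof.
move=> Ee Qq; have Ku : twist a e q \in [set: K] := in_setT _.
apply/(kerP _ Ku)/andP => [|[/eqP-> /mker fe1]]; rewrite /= twist_projE //; last first.
  by rewrite fe1 mulg1.
move/(canRL (mulgK _)); rewrite mul1g => xa; have [_ _ _ tiCB] := dprodP defC.
have xa1 : x ^+ a = 1.
  have : x ^+ a \in <[x]> :&: B by rewrite inE mem_cycle xa groupV fEB.
  by rewrite tiCB => /set1P.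
split; last by apply/kerP; rewrite // -[f e]invgK -xa xa1 invg1.
by move/eqP: xa1; rewrite -order_dvdn ordx /dvdn modn_small.
Qed.

Lemma ker_twist_proj :
  'ker twist_proj = [set twist 1 p.1 p.2 | p in setX ('ker f) Q].
Proof.
apply/setP=> u; apply/idP/imsetP=> [Ku | [[k q] /setXP[/= Kk Qq] ->]].
  have [a [e [q [Ee Qq def_u]]]] := twistP u.
  move: Ku; rewrite def_u mem_ker_twist_proj // => /andP[/eqP-> Ke].
  by exists (e, q) => //; apply/setXP.
by rewrite mem_ker_twist_proj ?eqxx ?(dom_ker Kk).
Qed.

Lemma card_ker_twist_proj : #|'ker twist_proj| = (#|'ker f| * #|B : W|)%N.
Proof.
rewrite ker_twist_proj card_in_imset; first by rewrite cardsX quo_f_im card_quotient.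
move=> [k q] [k' q'] /setXP[/= /dom_ker Ek Qq] /setXP[/= /dom_ker Ek' Qq'] /eqP.
by rewrite eq_twist // => /eqP[-> ->].
Qed.

Lemma stem_ext_twist_proj : stem_ext C twist_proj.
Proof.
split; first exact: twist_proj_im.
have [_ /subsetP kZE] := stem_f; rewrite ker_twist_proj subsetI.
apply/andP; split; apply/subsetP=> _ /imsetP[[k q] /setXP[/= Kk Qq] ->].
  apply: twist_center => //; first by have /setIP[] := kZE k Kk.
  by apply/kerP; rewrite ?(dom_ker Kk) //= (mker Kk) morph1.
by apply: twist_der => //; have /setIP[] := kZE k Kk.
Qed.

End LowerBoundStep.

Lemma card_dom_ker (gT aT : finGroupType) (D : {group gT}) (f : {morphism D >-> aT}) :
  #|D| = (#|'ker f| * #|f @* D|)%N.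
Proof. by rewrite -card_morphpre // morphimGK //; apply/subsetP/dom_ker. Qed.

Lemma exists_stem_ext (aT : finGroupType) (s : seq aT) (B : {group aT}) :
  cycle_dprod s = B -> abelian B ->
  exists (gT : finGroupType) (E : {group gT}) (f : {morphism E >-> aT}),
    stem_ext B f /\ #|'ker f| = schur_card s.
Proof.
elim: s B => [|x s IHs] B.
  rewrite /cycle_dprod big_nil => <- _; exists aT, 1%G, (idm 1).
  by rewrite /stem_ext morphim_idm // ker_idm sub1G cards1.
case/cycle_dprod_cons=> Bs defBs defB cB.
have sBsB : Bs \subset B by have [_ <- _ _] := dprodP defB; apply: mulG_subr.
have [gT [E [f [stem_f card_f]]]] := IHs Bs defBs (abelianS sBsB cB).
have ordx : #[x] = #[x].-1.+1 by rewrite prednK ?order_gt0.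
exists _, [set: twisted_prod (twist_ok cB defB stem_f ordx)]%G, (twist_proj_morphism _ _ _ _).
split; first exact: stem_ext_twist_proj.
by rewrite card_ker_twist_proj card_f mulnC /= defBs.
Qed.

Lemma schur_card_le_ker (aT gT : finGroupType) (A : {group aT}) (H : {group gT})
    (f : {morphism H >-> aT}) (s : seq aT) :
  abelian A -> schur_cover A f -> cycle_dprod s = A -> schur_card s <= #|'ker f|.
Proof.
move=> cA [[fH _] maxH] defA; have [gT' [E [fE [stemE <-]]]] := exists_stem_ext defA cA.
have := maxH _ E fE stemE; have [fEE _] := stemE.
by rewrite (card_dom_ker fE) (card_dom_ker f) fEE fH leq_pmul2r ?cardG_gt0.
Qed.

(* Squeezing #|'ker f| between schur_card_le_ker and card_der_morphpre forces
   'ker comm_xt = f @*^-1 B^#[x]. *)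
Lemma schur_cover_lcomm1 (aT gT : finGroupType) (A : {group aT}) (H : {group gT})
    (f : {morphism H >-> aT}) (x : aT) (B : {group aT}) :
  abelian A -> schur_cover A f -> <[x]> \x B = A ->
  {in B, forall b, lcomm f x b = 1 -> b \in powg #[x] B}.
Proof.
move=> cA sc defA b Bb xb1; have [[fH /subsetIP[kZ kH']] _] := sc.
have cfH : abelian (f @* H) by rewrite fH.
have sAH : A \subset f @* H by rewrite fH.
have sBA : B \subset A by have [_ <- _ _] := dprodP defA; apply: mulG_subr.
have [s defB _] := abelian_structure (abelianS sBA cA).
have defA' : cycle_dprod (x :: s) = A by rewrite /cycle_dprod big_cons defB.
have {}defB : cycle_dprod s = B := defB.
have /morphimP[xt Hxt _ /esym fxt] : x \in f @* H.
  by rewrite fH; have [_ <- _ _] := dprodP defA; apply/(subsetP (mulG_subl _ _))/cycle_id.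
have le_index : #|B : powg #[x] B| <= #|f @*^-1 B : 'ker (comm_xt cfH kZ B Hxt)|.
  rewrite -(leq_pmul2r (schur_card_gt0 defB)).
  have := schur_card_le_ker cA sc defA'; rewrite /= defB => /leq_trans; apply.
  apply: leq_trans (subset_leq_card kH') _.
  have defH : f @*^-1 A = H by rewrite -fH morphimGK // (subset_trans kH') ?der_sub.
  have := card_der_morphpre cfH kZ defA sAH Hxt fxt; rewrite defH => /leq_trans; apply.
  by rewrite leq_mul ?(card_der_morphpre_le cfH kZ defB) ?(subset_trans sBA).
have /morphimP[h Hh _ fh] := subsetP (subset_trans sBA sAH) b Bb.
have : h \in 'ker (comm_xt cfH kZ B Hxt).
  apply/kerP; first by rewrite mem_morphpre // -fh.
  by rewrite comm_xtE -(lcommE cA fH kZ Hxt Hh) fxt -fh.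
by rewrite (ker_comm_xt_eq defA sAH fxt) // fh => /morphpreP[].
Qed.

Lemma exponent_cycle_dprod (gT : finGroupType) (G : {group gT}) : abelian G ->
  exists x (B : {group gT}), #[x] = exponent G /\ <[x]> \x B = G.
Proof.
by move=> cGG; have [B /(_ cGG)[x ox defG]] := abelian_type_subproof G; exists x, B.
Qed.

Section ElementaryFactor.
Variables (aT gT : finGroupType) (H : {group gT}) (f : {morphism H >-> aT}).
Variable A : {group aT}.
Hypotheses (cA : abelian A) (fH : f @* H = A) (kZ : 'ker f \subset 'Z(H)).
Variables (p : nat) (u : aT) (B : {group aT}).
Hypotheses (pr_p : prime p) (defA : <[u]> \x B = A) (ou : #[u] = p).
Hypothesis lcomm_p : {in A &, forall a b, lcomm f a b ^+ p = 1}.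
Hypothesis u_powg : {in B, forall b, lcomm f u b = 1 -> b \in powg p B}.

Local Notation reduced := (reduced_adj A f).
Local Notation lcommXl := (lcommXl cA fH kZ).
Local Notation lcommMl := (lcommMl cA fH kZ).
Local Notation lcommMr := (lcommMr cA fH kZ).

Let sBA : B \subset A. Proof. by have [_ <- _ _] := dprodP defA; apply: mulG_subr. Qed.
Let Au : u \in A.
Proof. by have [_ <- _ _] := dprodP defA; apply/(subsetP (mulG_subl _ _))/cycle_id. Qed.

Let decA a : a \in A -> exists i, exists2 c, c \in B & a = u ^+ i * c.
Proof.
have [_ <- _ _] := dprodP defA.
by case/mulsgP=> _ c /cycleP[i ->] Bc ->; exists i, c.
Qed.

(* Write a = u ^+ i * c with c \in B: then c \in B^p is dominant, and p does
   not divide i since a is not. *)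
Lemma reduced_lcomm1_closed a b : reduced a b -> lcomm f u a = 1 -> lcomm f u b = 1.
Proof.
rewrite (reduced_adjE cA fH kZ) => /and4P[nda ndb _ /eqP ab1].
have [Aa Ab] : a \in A /\ b \in A by case/andP: nda; case/andP: ndb.
have [i [c Bc def_a]] := decA Aa; rewrite {}def_a in nda ab1 *.
have Ac := subsetP sBA c Bc.
rewrite lcommMr ?groupX // -{1}(expg1 u) (lcomm_cycle cA fH kZ) // mul1g.
move=> /(u_powg Bc)/(powgP _ _ (abelianS sBA cA))[y By def_c].
have Ay := subsetP sBA y By.
have dom_c d : d \in A -> lcomm f c d = 1.
  by move=> Ad; rewrite def_c lcommXl ?lcomm_p.
move: ab1; rewrite lcommMl ?groupX // dom_c // mulg1 lcommXl // => ubi.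
have p'i : ~~ (p %| i).
  apply: contraTN nda => /dvdnP[t ->]; rewrite mulnC expgM -ou expg_order expg1n mul1g.
  by rewrite /nondominant Ac negbK; apply/(dominantP cA fH kZ Ac).
have /eqnP co_pi : coprime p i by rewrite prime_coprime.
by apply/eqP; rewrite -order_eq1 -dvdn1 -co_pi dvdn_gcd !order_dvdn ubi lcomm_p ?eqxx.
Qed.

Lemma reduced_disconnected_witness v : v \in A -> lcomm f u v != 1 ->
  reduced_disconnected A f.
Proof.
move=> Av uv1; exists u, v; split; first exact: (nondominantP cA fH kZ Au Av).
  by apply: (nondominantP cA fH kZ Av Au); rewrite lcommC invg_eq1.
have closedS : closed reduced [pred a | lcomm f u a == 1].
  move=> a b ab; apply/eqP/eqP; first exact: reduced_lcomm1_closed.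
  by apply: reduced_lcomm1_closed; rewrite (reduced_adj_sym cA fH kZ).
apply/negP=> /(closed_connect closedS); rewrite !inE lcommxx eqxx.
by rewrite (negbTE uv1).
Qed.

End ElementaryFactor.

Lemma disconnected_cycle_abelem (aT gT : finGroupType) (A : {group aT}) (H : {group gT})
    (f : {morphism H >-> aT}) :
  abelian A -> ~~ cyclic A -> schur_cover A f -> reduced_disconnected A f ->
  exists p (G K : {group aT}), [/\ prime p, cyclic G, p.-abelem K & G \x K = A].
Proof.
move=> cA ncA sc [u [v [ndu ndv not_uv]]]; have [[fH /subsetIP[kZ _]] _] := sc.
have [x [B [ox defA]]] := exponent_cycle_dprod cA.
have [sBA Ax] : B \subset A /\ x \in A.
  have [_ <- _ _] := dprodP defA; split; first exact: mulG_subr.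
  exact/(subsetP (mulG_subl _ _))/cycle_id.
have cB := abelianS sBA cA.
have [w Bw ow] := exponent_witness (abelian_nil cB); have Aw := subsetP sBA w Bw.
have lcommN := lcomm_exponent cA fH kZ defA (cycle_cyclic x).
have ntB : B :!=: 1 by apply: contra ncA => /eqP B1; rewrite -defA B1 dprodg1 cycle_cyclic.
have N_gt1 : 1 < exponent B.
  rewrite ltn_neqAle exponent_gt0 andbT eq_sym.
  by apply: contra ntB => /eqP e1; rewrite trivg_exponent e1.
have oxw : #[lcomm f x w] = exponent B.
  apply/eqP; rewrite eqn_dvd order_dvdn lcommN // ow order_dvdn eqxx /=.
  have : lcomm f x (w ^+ #[lcomm f x w]) = 1 by rewrite (lcommXr cA fH kZ) ?expg_order.
  move/(schur_cover_lcomm1 cA sc defA (groupX _ Bw)).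
  by rewrite powg_exponent ?inE // ox exponentS.
have pN : prime (exponent B).
  apply/negPn/negP=> N'p; move/negP: not_uv; apply.
  exact: (reduced_connected cA fH kZ lcommN Ax Aw oxw).
by exists (exponent B), <[x]>%G, B; rewrite cycle_cyclic abelemE ?cB ?dvdnn.
Qed.

Lemma cycle_abelem_disconnected (aT gT : finGroupType) (A : {group aT}) (H : {group gT})
    (f : {morphism H >-> aT}) :
  abelian A -> ~~ cyclic A -> schur_cover A f ->
  (exists p (G K : {group aT}), [/\ prime p, cyclic G, p.-abelem K & G \x K = A]) ->
  reduced_disconnected A f.
Proof.
move=> cA ncA sc [p [G [K [pr_p cG abK defA]]]]; have [[fH /subsetIP[kZ _]] _] := sc.
have [u [K' [ou defK]]] := exponent_cycle_dprod (abelem_abelian abK).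
have ntK : K :!=: 1 by apply: contra ncA => /eqP K1; rewrite -defA K1 dprodg1.
have eK : exponent K = p.
  have /primeP[_ dvd_p] := pr_p; move: (abK); rewrite abelemE // => /andP[_ eKp].
  case/pred2P: (dvd_p _ eKp) => // eK1.
  by move: ntK; rewrite trivg_exponent eK1.
have defA2 : <[u]> \x (G \x K') = A by rewrite dprodA (dprodC <[u]>) -dprodA defK.
have [[_ B _ defB] _ _ _] := dprodP defA2; rewrite defB in defA2.
have sBA : B \subset A by have [_ <- _ _] := dprodP defA2; apply: mulG_subr.
have lcomm_p : {in A &, forall a b, lcomm f a b ^+ p = 1}.
  by rewrite -eK; apply: (lcomm_exponent cA fH kZ defA cG).
have u_powg : {in B, forall b, lcomm f u b = 1 -> b \in powg p B}.
  by rewrite -eK -ou; apply: (schur_cover_lcomm1 cA sc defA2).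
have [cB ou'] : abelian B /\ #[u] = p by rewrite (abelianS sBA cA) ou eK.
have p_dvd_B : p %| #|B|.
  apply: contraR ncA => p'B.
  have [sK'K sK'B] : K' \subset K /\ K' \subset B.
    by have [_ <- _ _] := dprodP defK; have [_ <- _ _] := dprodP defB; rewrite !mulG_subr.
  have K'1 : K' :=: 1.
    apply/trivgP/subsetP=> k K'k; rewrite inE; apply: contraR p'B => ntk.
    by rewrite -(abelem_order_p abK (subsetP sK'K k K'k) ntk) order_dvdG ?(subsetP sK'B).
  have co_uB : coprime #|<[u]>| #|B| by rewrite -orderE ou' prime_coprime.
  rewrite (cyclic_dprod defA2) //; first exact: cycle_cyclic.
  by rewrite -defB K'1 dprodg1.
have [_ [v Bv nv]] := properP (powg_proper cB pr_p p_dvd_B).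
apply: (reduced_disconnected_witness cA fH kZ pr_p defA2 ou' lcomm_p u_powg (subsetP sBA v Bv)).
by apply: contra nv => /eqP/(u_powg v Bv).
Qed.

Theorem corollary4p7 (aT : finGroupType) (A : {group aT})
    (gT : finGroupType) (H : {group gT}) (f : {morphism H >-> aT}) :
  abelian A -> ~~ cyclic A -> schur_cover A f ->
  (reduced_disconnected A f <->
   exists (p : nat) (G K : {group aT}),
     [/\ prime p, cyclic G, p.-abelem K & G \x K = A]).
Proof.
move=> cA ncA sc; split; first exact: disconnected_cycle_abelem.
exact: cycle_abelem_disconnected.
Qed.
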